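(* Let $V$ be a finite-dimensional real vector space with a non-degenerate inner product of signature $(p,q)$, $p,q\ge1$, $p+q\ge3$; let $Q(v)=(v,v)$ and $\mathcal{I}=Q\cdot\mathbb{R}[V,\mathbb{R}]$. Let $W$ be a finite-dimensional real vector space of dimension $w$ and $r\le w$. Let $\Delta$ be an $\mathbb{R}[V,\mathbb{R}]$-submodule of $\mathbb{R}[V,W]$ such that $Q\cdot x\in\Delta$ implies $x\in\Delta$. If there exist $x_1,\dots,x_r\in\Delta$ with $I(x_1,\dots,x_r)\ne\{0\}$, then there exist $x_1,\dots,x_r\in\Delta$ with $k(x_1,\dots,x_r)=0$, i.e. with $I(x_1,\dots,x_r)\not\subset\mathcal{I}$.
   Context: $\mathbb{R}[V,\mathbb{R}]$ is the ring of real polynomial functions on $V$ and $\mathbb{R}[V,W]$ the module of polynomial maps $V\to W$. For $x_1,\dots,x_r\in\mathbb{R}[V,W]$ and a basis of $W$, $I(x_1,\dots,x_r)$ is the ideal generated by all $r\times r$ minors of the $w\times r$ matrix whose $i$-th column is the coordinate vector of $x_i$ (independent of basis). If $I(x_1,\dots,x_r)\neq\{0\}$, $k(x_1,\dots,x_r)$ is the smallest integer $k\ge0$ with $I(x_1,\dots,x_r)\not\subset\mathcal{I}^{k+1}$. *)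

From HB Require Import structures.
From mathcomp Require Import all_boot all_algebra.
From mathcomp Require Import reals.
From mathcomp Require Import mpoly.

Set Implicit Arguments.
Unset Strict Implicit.
Unset Printing Implicit Defensive.

Import GRing.Theory.
Local Open Scope ring_scope.

(* V = R^n (row vectors); a symmetric bilinear form on V is a symmetric
   matrix B : 'M[R]_n, (u,v) = u B v^T. *)

Definition std_sig (R : ringType) (p q : nat) : 'M[R]_(p + q) :=
  diag_mx (\row_(i < p + q) (if (i < p)%N then 1 else -1)).

(* B is a non-degenerate symmetric form of signature (p,q): there is a
   basis (rows of an invertible P) in which B has matrix std_sig p q. *)
Definition has_signature (R : realType) (p q : nat) (B : 'M[R]_(p + q)) : Prop :=
  B^T = B /\ exists P : 'M[R]_(p + q), P \in unitmx /\ P *m B *m P^T = std_sig R p q.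

Definition quad_poly (R : realType) (n : nat) (B : 'M[R]_n) : {mpoly R[n]} :=
  \sum_(i < n) \sum_(j < n) B i j *: ('X_i * 'X_j).

(* Polynomial maps V -> W, W of dimension w with a fixed basis: column
   vectors of coordinate polynomials, i.e. elements of R[V,R]^w. *)
Definition polymap (R : realType) (n w : nat) := 'cV[{mpoly R[n]}]_w.

Definition is_submodule (R : realType) (n w : nat) (D : polymap R n w -> Prop) : Prop :=
  [/\ D 0,
      forall x y, D x -> D y -> D (x + y)
    & forall (f : {mpoly R[n]}) x, D x -> D (map_mx (fun c => f * c) x)].

Definition minor (R : realType) (n w r : nat) (M : 'M[{mpoly R[n]}]_(w, r))
  (f : {ffun 'I_r -> 'I_w}) : {mpoly R[n]} := \det (rowsub f M).

(* g belongs to the ideal I(x_1,...,x_r) generated by all r x r minors of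
   the matrix M whose i-th column is x_i. *)
Definition in_minor_ideal (R : realType) (n w r : nat) (M : 'M[{mpoly R[n]}]_(w, r))
  (g : {mpoly R[n]}) : Prop :=
  exists c : {ffun 'I_r -> 'I_w} -> {mpoly R[n]},
    g = \sum_(f : {ffun 'I_r -> 'I_w}) c f * minor M f.

Definition in_Qideal (R : realType) (n : nat) (Q g : {mpoly R[n]}) : Prop :=
  exists h : {mpoly R[n]}, g = Q * h.

(* Q is a prime element of R[V].  In coordinates x = y M diagonalising the form,
   Q = e_0 y_0^2 + ... + e_k y_k^2 with e_0 e_1 > 0 (possible since p + q >= 3); as a
   polynomial in y_0 over R[y_1, ..., y_k] it is, up to the unit e_0, the monic
   X^2 - c with c = -e_0^-1 (e_1 y_1^2 + ...), and c is not a square since its leading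
   coefficient -e_1/e_0 is negative.  Now write a nonzero g of the minor ideal as
   Q^m h with Q not dividing h.  Unless some maximal minor is already prime to Q
   (and m = 0 is trivial), Q divides every maximal minor, so the columns are
   dependent modulo the prime Q with some coefficient a not divisible by Q; dividing
   that combination by Q and putting it in place of the corresponding column keeps
   the columns in Delta (Delta is Q-saturated) and multiplies every minor by a/Q, so
   the same coefficients give Q^(m-1) (a h). *)

From HB Require Import structures.
From mathcomp Require Import all_boot all_order all_algebra all_fingroup.
From mathcomp Require Import reals.
From mathcomp Require Import mpoly.
From mathcomp Require Import ring.
From Stdlib Require Import Classical.
Set Implicit Arguments.
Unset Strict Implicit.
Unset Printing Implicit Defensive.
Import GRing.Theory Num.Theory Order.TTheory.
Local Open Scope ring_scope.

Section Divisibility.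
Variable D : comRingType.
Implicit Types a b Q : D.

Definition dvdr a b : Prop := exists c, b = a * c.

Definition prime_elt Q : Prop :=
  [/\ Q != 0, ~ dvdr Q 1 & forall a b, dvdr Q (a * b) -> dvdr Q a \/ dvdr Q b].

End Divisibility.

Lemma prime_elt_unitMl (D : comUnitRingType) (u d : D) :
  u \is a GRing.unit -> prime_elt d -> prime_elt (u * d).
Proof.
move=> uU [d0 d_not_unit d_prime].
have dvdr_uM x : dvdr (u * d) x <-> dvdr d x.
  split=> [[c ->]|[c ->]]; first by exists (u * c); rewrite mulrCA mulrA.
  by exists (u^-1 * c); rewrite mulrCA mulrA mulrA mulVr ?mul1r.
split.
- by apply: contraNneq d0 => ud0; rewrite -(mulKr uU d) ud0 mulr0.
- by move/dvdr_uM.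
- by move=> a b /dvdr_uM/d_prime[] /dvdr_uM; [left | right].
Qed.

Lemma prime_elt_rmorph (D D' : comRingType) (phi : {rmorphism D -> D'})
    (psi : {rmorphism D' -> D}) (Q : D) :
  cancel phi psi -> prime_elt (phi Q) -> prime_elt Q.
Proof.
move=> phiK [phiQ0 phiQ_not_unit phiQ_prime].
have dvdr_pullback x : dvdr (phi Q) (phi x) -> dvdr Q x.
  by move=> [c phix]; exists (psi c); rewrite -[x]phiK phix rmorphM phiK.
split.
- by apply: contraNneq phiQ0 => ->; rewrite rmorph0.
- by move=> [c c1]; apply: phiQ_not_unit; exists (phi c); rewrite -rmorphM -c1 rmorph1.
- move=> a b [c abQ].
  have /phiQ_prime[] : dvdr (phi Q) (phi a * phi b) by exists (phi c); rewrite -!rmorphM abQ.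
    by left; exact: dvdr_pullback.
  by right; exact: dvdr_pullback.
Qed.

Section QuadraticPrime.
Variables (A : idomainType) (c : A).

(* [c] is not a square in the fraction field of [A]. *)
Definition nonsquare : Prop := forall a b : A, a * a = b * b * c -> b = 0.

Local Notation d := ('X^2 - c%:P).

Lemma size_linear_poly (p : {poly A}) : (size p <= 2)%N -> p = (p`_1)%:P * 'X + (p`_0)%:P.
Proof.
move=> size_p; apply/polyP => i; rewrite coefD coefCM coefX coefC.
case: i => [|[|i]] /=; rewrite ?mulr0 ?mulr1 ?add0r ?addr0 //.
exact: nth_default (leq_trans size_p _).
Qed.

Lemma dvd_XsubC2_linear (u v : A) (t : {poly A}) :
  u%:P * 'X + v%:P = d * t -> u = 0 /\ v = 0.
Proof.
move=> uv_dt; have size_lin : (size (u%:P * 'X + v%:P)%R <= 2)%N.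
  by rewrite size_MXaddC; case: ifP => // _; rewrite ltnS size_polyC leq_b1.
have t0 : t = 0.
  apply: contraTeq size_lin => t0; rewrite uv_dt mulrC size_Mmonic ?monicXnsubC //.
  by rewrite size_XnsubC // addn3 -ltnNge !ltnS lt0n size_poly_eq0.
have := size_MXaddC u%:P v; rewrite uv_dt t0 mulr0 size_poly0 polyC_eq0.
by do 2!case: eqP.
Qed.

Lemma nonsquare_linear_factors (a0 a1 h0 h1 : A) : nonsquare ->
    a1 * h0 + a0 * h1 = 0 -> a0 * h0 + a1 * h1 * c = 0 ->
  (a0 = 0 /\ a1 = 0) \/ (h0 = 0 /\ h1 = 0).
Proof.
move=> c_nonsq E1 E0.
have [N0 | N_neq0] := eqVneq (a0 * a0 - a1 * a1 * c) 0.
  have a10 : a1 = 0 by apply: (c_nonsq a0); apply/eqP; rewrite -subr_eq0 N0.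
  by left; move: N0; rewrite a10 !mul0r subr0 => /eqP; rewrite mulf_eq0 orbb => /eqP.
(* The norm [a0^2 - a1^2 c] of [a0 + a1 sqrt c] annihilates [h0 + h1 sqrt c]. *)
right; split; apply: (mulfI N_neq0); rewrite mulr0.
  by transitivity (a0 * (a0 * h0 + a1 * h1 * c) - a1 * c * (a1 * h0 + a0 * h1));
    [ring | rewrite E0 E1 !mulr0 subr0].
by transitivity (a0 * (a1 * h0 + a0 * h1) - a1 * (a0 * h0 + a1 * h1 * c));
  [ring | rewrite E0 E1 !mulr0 subr0].
Qed.

Lemma prime_elt_XsubC2 : nonsquare -> prime_elt d.
Proof.
move=> c_nonsq; have d_monic : d \is monic by apply: monicXnsubC.
split=> [|[t t1]|f g [K fgK]]; first exact: monic_neq0.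
  have lin_t : 0%:P * 'X + 1%:P = d * t by rewrite polyC0 mul0r add0r polyC1.
  by have [_ /eqP] := dvd_XsubC2_linear lin_t; rewrite oner_eq0.
have rmod_lin p : Pdiv.CommonRing.rmodp p d
    = ((Pdiv.CommonRing.rmodp p d)`_1)%:P * 'X + ((Pdiv.CommonRing.rmodp p d)`_0)%:P.
  apply: size_linear_poly; have := Pdiv.Ring.ltn_rmodpN0 p (monic_neq0 d_monic).
  by rewrite size_XnsubC.
move: (Pdiv.RingMonic.rdivp_eq d_monic f) (Pdiv.RingMonic.rdivp_eq d_monic g).
move: (rmod_lin f) (rmod_lin g).
set fq := Pdiv.CommonRing.rdivp f d; set fr := Pdiv.CommonRing.rmodp f d.
set gq := Pdiv.CommonRing.rdivp g d; set gr := Pdiv.CommonRing.rmodp g d.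
set a0 := fr`_0; set a1 := fr`_1; set h0 := gr`_0; set h1 := gr`_1 => Efr Egr Ef Eg.
(* [fr * gr] is divisible by [d] and congruent modulo [d] to a linear polynomial. *)
have [] := @dvd_XsubC2_linear (a1 * h0 + a0 * h1) (a0 * h0 + a1 * h1 * c)
  (K - (fq * gq * d + fq * gr + fr * gq) - (a1 * h1)%:P).
  by rewrite mulrBr mulrBr -fgK Ef Eg Efr Egr !rmorphD !rmorphM /=; ring.
move=> /nonsquare_linear_factors E1 /E1 {E1} [//|[a00 a10]|[h00 h10]].
  by left; exists fq; rewrite Ef Efr a00 a10 !rmorph0 mul0r !addr0 mulrC.
by right; exists gq; rewrite Eg Egr h00 h10 !rmorph0 mul0r !addr0 mulrC.
Qed.

End QuadraticPrime.

Section DiagonalQuadric.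
Variables (R : realDomainType) (k : nat) (w : 'I_k.+1 -> R).

Let c : {mpoly R[k.+1]} := \sum_j w j *: 'X_j ^+ 2.

Lemma mnm_sq_inj : injective (fun j : 'I_k.+1 => (U_(j) *+ 2)%MM).
Proof.
move=> i j /(congr1 (fun m : 'X_{1..k.+1} => m j)).
by rewrite !mulmnE !mnm1E eqxx; case: eqP.
Qed.

Lemma mcoeff_diag_quadric i : c@_(U_(i) *+ 2) = w i.
Proof.
rewrite (raddf_sum (mcoeff _)) (bigD1 i) //= big1 => [|j /negbTE ji].
  by rewrite mcoeffZ mpolyXn mcoeffX eqxx mulr1 addr0.
by rewrite mcoeffZ mpolyXn mcoeffX (inj_eq mnm_sq_inj) ji mulr0.
Qed.

Lemma mlead_diag_quadric : w ord0 != 0 -> mlead c = (U_(ord0) *+ 2)%MM.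
Proof.
move=> w0; apply: le_anti; rewrite msupp_le_mlead ?andbT; last first.
  by rewrite mcoeff_msupp mcoeff_diag_quadric.
apply: le_trans (mlead_sum_le _ _ _) _; apply: joins_le => j _.
apply: le_trans (mleadZ_le _ _) _; rewrite mpolyXn mleadXm.
have [->|j0] := eqVneq j ord0; first exact: lexx.
apply/ltW/ltmcP; first by rewrite !mdegMn !mdeg1.
exists ord0 => [l|]; first by rewrite ltn0.
by rewrite !mulmnE !mnm1E eqxx (negbTE j0).
Qed.

(* Compare leading coefficients: a square has a nonnegative one, while that of [c] is negative. *)
Lemma nonsquare_diag_quadric : w ord0 < 0 -> nonsquare c.
Proof.
move=> w0 a b ab; apply: contraTeq isT => b0.
have c0 : c != 0 by rewrite -mleadc_eq0 mlead_diag_quadric ?mcoeff_diag_quadric ?ltr0_neq0.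
have a0 : a != 0.
  by apply: contraNneq (mulf_neq0 (mulf_neq0 b0 b0) c0) => a0; rewrite -ab a0 mulr0.
have := congr1 (fun p : {mpoly R[k.+1]} => mleadc p) ab.
rewrite /= (mleadM a0 a0) mleadcM (mleadM (mulf_neq0 b0 b0) c0) mleadcM.
rewrite (mleadM b0 b0) mleadcM mlead_diag_quadric ?ltr0_neq0 // mcoeff_diag_quadric => sq_eq.
have sq_a : 0 <= mleadc a * mleadc a by rewrite -expr2 sqr_ge0.
have sq_b : 0 < mleadc b * mleadc b by rewrite lt0r mulf_neq0 ?mleadc_eq0 //= -expr2 sqr_ge0.
by move: sq_a; rewrite sq_eq pmulr_rge0 // leNgt w0.
Qed.

End DiagonalQuadric.

Lemma quad_form_mxE (S : comRingType) n (u : 'rV[S]_n) (C : 'M[S]_n) :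
  (u *m C *m u^T) 0 0 = \sum_i \sum_j C i j * u 0 i * u 0 j.
Proof.
rewrite mxE; under eq_bigr => j _ do rewrite !mxE mulr_suml.
rewrite exchange_big /=; apply: eq_bigr => i _; apply: eq_bigr => j _.
by rewrite [u 0 i * _]mulrC.
Qed.

Lemma quad_form_diag (S : comRingType) n (u : 'rV[S]_n) (e : 'rV[S]_n) :
  (u *m diag_mx e *m u^T) 0 0 = \sum_i e 0 i * u 0 i ^+ 2.
Proof.
rewrite mul_mx_diag mxE; apply: eq_bigr => i _.
by rewrite !mxE mulrAC mulrC expr2.
Qed.

Lemma mpoly_rmorph_id (S : comRingType) n (f : {rmorphism {mpoly S[n]} -> {mpoly S[n]}}) :
  (forall c, f c%:MP = c%:MP) -> (forall i, f 'X_i = 'X_i) -> f =1 id.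
Proof.
move=> fC fX p; rewrite [in RHS](mpolyE p) [in LHS](mpolyE p) rmorph_sum.
apply: eq_bigr => m _; rewrite -mul_mpolyC rmorphM fC mpolyXE_id rmorph_prod.
by congr (_ * _); apply: eq_bigr => i _; rewrite rmorphXn fX.
Qed.

Section ChangeOfVariables.
Variables (R : fieldType) (k : nat).

Local Notation cst := (polyC \o @mpolyC k R).

Definition split_var (j : 'I_k.+1) : {poly {mpoly R[k]}} :=
  if unlift ord0 j is Some j' then ('X_j')%:P else 'X.

Definition split_row : 'rV[{poly {mpoly R[k]}}]_k.+1 := \row_j split_var j.

(* [split_subst M] substitutes [x := y *m M] and reads [y_0] as the variable of the
   outer polynomial ring over [R[y_1, ..., y_k]]; [merge_subst N] substitutes back
   [y := x *m N]. *)
Definition split_subst (M : 'M[R]_k.+1) : {mpoly R[k.+1]} -> {poly {mpoly R[k]}} :=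
  mmap cst (fun i => (split_row *m map_mx cst M) 0 i).

HB.instance Definition _ M := GRing.RMorphism.copy (split_subst M)
  (mmap cst (fun i => (split_row *m map_mx cst M) 0 i)).

Lemma split_substX M i : split_subst M 'X_i = (split_row *m map_mx cst M) 0 i.
Proof. by rewrite /split_subst mmapX mmap1U. Qed.

Lemma split_substZ M c p : split_subst M (c *: p) = c%:MP%:P * split_subst M p.
Proof. exact: mmapZ. Qed.

Definition lin_form (N : 'M[R]_k.+1) (j : 'I_k.+1) : {mpoly R[k.+1]} :=
  \sum_l N l j *: 'X_l.

Definition merge_subst (N : 'M[R]_k.+1) (p : {poly {mpoly R[k]}}) : {mpoly R[k.+1]} :=
  (map_poly (comp_mpoly [tuple lin_form N (lift ord0 j) | j < k]) p).[lin_form N ord0].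

HB.instance Definition _ N := GRing.RMorphism.copy (merge_subst N)
  (horner_eval (lin_form N ord0) \o map_poly (comp_mpoly [tuple lin_form N (lift ord0 j) | j < k])).

Lemma merge_substC N c : merge_subst N c%:MP%:P = c%:MP.
Proof. by rewrite /merge_subst map_polyC hornerC; apply: comp_mpolyC. Qed.

Lemma merge_subst_split_var N j : merge_subst N (split_var j) = lin_form N j.
Proof.
rewrite /merge_subst /split_var; case: unliftP => [j' ->|->].
  by rewrite map_polyC hornerC [LHS]comp_mpolyXU -tnth_nth tnth_mktuple.
by rewrite map_polyX hornerX.
Qed.

Lemma split_substK M N : N *m M = 1%:M -> cancel (split_subst M) (merge_subst N).
Proof.
move=> NM; apply: (mpoly_rmorph_id (f := merge_subst N \o split_subst M)) => [c|i] /=.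
  by rewrite /split_subst mmapC merge_substC.
rewrite split_substX mxE rmorph_sum /=.
under eq_bigr => j _ do
  rewrite !mxE rmorphM /= merge_substC merge_subst_split_var mulrC mul_mpolyC scaler_sumr.
rewrite exchange_big /=.
under eq_bigr => l _ do (under eq_bigr => j _ do rewrite scalerA; rewrite -scaler_suml).
have NM_entry l : \sum_j M j i * N l j = (l == i)%:R.
  have := congr1 (fun A : 'M[R]_k.+1 => A l i) NM; rewrite !mxE => <-.
  by apply: eq_bigr => j _; rewrite mulrC.
under eq_bigr => l _ do rewrite NM_entry.
by rewrite (bigD1 i) //= eqxx scale1r big1 ?addr0 // => l /negbTE ->; rewrite scale0r.
Qed.

Lemma split_subst_quad M (B : 'M[R]_k.+1) (e : 'rV[R]_k.+1) :
    M *m B *m M^T = diag_mx e ->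
  split_subst M (\sum_i \sum_j B i j *: ('X_i * 'X_j))
    = (e 0 ord0)%:MP%:P * 'X^2 + (\sum_j e 0 (lift ord0 j) *: 'X_j ^+ 2)%:P.
Proof.
move=> MBM; set L := split_row *m map_mx cst M.
transitivity ((L *m map_mx cst B *m L^T) 0 0).
  rewrite quad_form_mxE rmorph_sum; apply: eq_bigr => i _; rewrite rmorph_sum.
  apply: eq_bigr => j _; by rewrite /= split_substZ rmorphM /= !split_substX mulrA [in RHS]mxE.
have -> : L *m map_mx cst B *m L^T = split_row *m map_mx cst (M *m B *m M^T) *m split_row^T.
  by rewrite /L trmx_mul !map_mxM map_trmx !mulmxA.
rewrite MBM map_diag_mx quad_form_diag big_ord_recl !mxE /split_var unlift_none.
congr (_ + _); rewrite rmorph_sum; apply: eq_bigr => j _.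
by rewrite !mxE /split_var liftK /= -mul_mpolyC rmorphM rmorphXn.
Qed.

End ChangeOfVariables.

Lemma prime_elt_quad_poly (R : realType) n (B M N : 'M[R]_n) (e : 'rV[R]_n) :
    (2 <= n)%N -> N *m M = 1%:M -> M *m B *m M^T = diag_mx e ->
    (forall i0 i1 : 'I_n, val i0 = 0%N -> val i1 = 1%N -> 0 < e 0 i0 * e 0 i1) ->
  prime_elt (quad_poly B).
Proof.
case: n B M N e => [|[|k]] // B M N e _ NM MBM /(_ ord0 (lift ord0 ord0) erefl erefl) e01.
have e0 : e 0 ord0 != 0 by apply: contraTneq e01 => ->; rewrite mul0r ltxx.
apply: (prime_elt_rmorph (split_substK NM)); rewrite /quad_poly /= (split_subst_quad MBM).
set s := \sum_j _ *: _.
have -> : (e 0 ord0)%:MP%:P * 'X^2 + s%:P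
          = (e 0 ord0)%:MP%:P * ('X^2 - (- (e 0 ord0)^-1 *: s)%:P).
  by rewrite mulrBr -!rmorphM /= mul_mpolyC scalerA mulrN mulfV // scaleN1r !rmorphN opprK.
apply: prime_elt_unitMl.
  by apply/unitrP; exists (e 0 ord0)^-1%:MP%:P; rewrite -!rmorphM /= mulVf // mulfV.
apply: prime_elt_XsubC2.
rewrite /s scaler_sumr; under eq_bigr do rewrite scalerA.
apply: (nonsquare_diag_quadric (w := fun j => - (e 0 ord0)^-1 * e 0 (lift ord0 j))).
have : 0 < (e 0 ord0)^-1 ^+ 2 * (e 0 ord0 * e 0 (lift ord0 ord0)).
  by rewrite mulr_gt0 // exprn_even_gt0 //= invr_eq0.
by rewrite expr2 -mulrA mulKf // mulNr oppr_lt0.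
Qed.

Lemma signature_diag_form (R : realType) p q (B : 'M[R]_(p + q)) :
    (1 <= p)%N -> (1 <= q)%N -> (3 <= p + q)%N -> has_signature B ->
  exists (M N : 'M[R]_(p + q)) (e : 'rV[R]_(p + q)),
    [/\ N *m M = 1%:M, M *m B *m M^T = diag_mx e &
        forall i0 i1 : 'I_(p + q), val i0 = 0%N -> val i1 = 1%N -> 0 < e 0 i0 * e 0 i1].
Proof.
move=> p1 q1 pq3 [_ [P [P_unit PBP]]].
pose o0 : 'I_(p + q) := Ordinal (ltnW (ltnW pq3)).
pose o2 : 'I_(p + q) := Ordinal pq3.
(* With a single positive square, swap it away from the first two positions. *)
pose s : 'S_(p + q) := if (2 <= p)%N then 1%g else tperm o0 o2.
pose sg (i : 'I_(p + q)) : R := if (i < p)%N then 1 else -1.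
exists (perm_mx s *m P), (invmx P *m perm_mx s^-1), (\row_j sg (s j)); split.
- rewrite -mulmxA [perm_mx _ *m (perm_mx _ *m _)]mulmxA -perm_mxM mulVg perm_mx1.
  by rewrite mul1mx mulVmx.
- rewrite trmx_mul tr_perm_mx !mulmxA -(mulmxA _ P) -(mulmxA _ (P *m B)) PBP.
  rewrite -col_permE -row_permE; apply/matrixP => j l.
  by rewrite /std_sig !mxE (inj_eq perm_inj); case: (j == l); rewrite ?mulr1n ?mulr0n.
move=> i0 i1 i00 i11; rewrite !mxE /sg /s.
have [p2|] := boolP (2 <= p)%N.
  by rewrite !perm1 i00 i11 (leq_trans _ p2) // (leq_trans _ p2) // mulr1.
rewrite -ltnNge ltnS => p_le1; have -> : i0 = o0 by apply: val_inj.
have neq_i1 (j : 'I_(p + q)) : val j != 1%N -> j != i1.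
  by move=> j1; apply: contra j1 => /eqP ->; rewrite i11.
rewrite tpermL tpermD ?neq_i1 //= i11 ltnNge (leq_trans p_le1) //= ltnNge p_le1 /=.
by rewrite mulrNN mulr1 ltr01.
Qed.

Section ColumnReplacement.
Variable D : comRingType.

Definition col_repl m n (A : 'M[D]_(m, n)) (j : 'I_n) (v : 'I_m -> D) : 'M[D]_(m, n) :=
  \matrix_(i, c) if c == j then v i else A i c.

Lemma col_replK m n (A : 'M[D]_(m, n)) j v u :
  col_repl (col_repl A j v) j u = col_repl A j u.
Proof. by apply/matrixP => i c; rewrite !mxE; case: eqP. Qed.

Lemma mulmx_col_repl1 m n (A : 'M[D]_(m, n)) j (a : 'I_n -> D) :
  A *m col_repl 1%:M j a = col_repl A j (fun i => \sum_k A i k * a k).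
Proof.
apply/matrixP => i c; rewrite !mxE; under eq_bigr do rewrite mxE.
by case: eqP => // _; rewrite -[in RHS](mulmx1 A) mxE.
Qed.

Lemma cofactor_col_repl n (A : 'M[D]_n) j v i :
  cofactor (col_repl A j v) i j = cofactor A i j.
Proof.
rewrite /cofactor; congr (_ * \det _); apply/matrixP => k l.
by rewrite !mxE eq_sym (negbTE (neq_lift j l)).
Qed.

Lemma det_col_repl1 n j (v : 'I_n -> D) : \det (col_repl 1%:M j v) = v j.
Proof.
have cofactor1 i : cofactor (1%:M : 'M[D]_n) i j = (i == j)%:R.
  by have := congr1 (fun B : 'M[D]_n => B j i) (@adj1 D n); rewrite !mxE eq_sym.
rewrite (expand_det_col _ j) (bigD1 j) //= big1 => [|i /negbTE ij].
  by rewrite cofactor_col_repl cofactor1 mxE !eqxx mulr1 addr0.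
by rewrite cofactor_col_repl cofactor1 ij mulr0.
Qed.

Lemma det_rowsub_col_repl w r (M : 'M[D]_(w, r)) j (a : 'I_r -> D) Q (y : 'I_w -> D) :
    (forall i, Q * y i = \sum_c M i c * a c) ->
  forall f : 'I_r -> 'I_w,
    Q * \det (rowsub f (col_repl M j y)) = a j * \det (rowsub f M).
Proof.
move=> Qy f; set M' := col_repl M j y.
have scaleQ : M *m col_repl 1%:M j a = M' *m col_repl 1%:M j (fun k => (k == j)%:R * Q).
  rewrite !mulmx_col_repl1 col_replK; apply/matrixP => i c; rewrite !mxE.
  case: eqP => // _.
  rewrite -Qy (bigD1 j) //= big1 => [|k /negbTE kj]; last by rewrite kj mul0r mulr0.
  by rewrite /M' mxE !eqxx mul1r addr0 mulrC.
have := congr1 (fun A => \det (rowsub f A)) scaleQ.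
by rewrite -!mul_rowsub_mx !det_mulmx !det_col_repl1 eqxx mul1r mulrC [Q * _]mulrC => ->.
Qed.

End ColumnReplacement.

Lemma dvdr_minors_dependent (D : comRingType) (Q : D) w r (M : 'M[D]_(w, r)) :
    ~ dvdr Q 1 -> (forall f : 'I_r -> 'I_w, dvdr Q (\det (rowsub f M))) ->
  exists a : 'I_r -> D, exists j, ~ dvdr Q (a j) /\ forall i, dvdr Q (\sum_c M i c * a c).
Proof.
elim: r M => [|r IHr] M Q_not_unit dvdQ_minors.
  have f0 : 'I_0 -> 'I_w by case.
  by have := dvdQ_minors f0; rewrite det_mx00.
pose M0 : 'M[D]_(w, r) := col' ord_max M.
have [dvdQ_minors0 | /not_all_ex_not [g0 ndvdQ_g0]] :=
  classic (forall g, dvdr Q (\det (rowsub g M0))).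
  have [a0 [j0 [ndvdQ_a0 dvdQ_M0a0]]] := IHr M0 Q_not_unit dvdQ_minors0.
  exists (fun c => if unlift ord_max c is Some c' then a0 c' else 0), (lift ord_max j0).
  rewrite liftK; split=> // i; have := dvdQ_M0a0 i.
  rewrite (bigD1_ord ord_max) //= unlift_none mulr0 add0r; congr dvdr.
  by apply: eq_bigr => c _; rewrite liftK mxE.
(* Cofactors along a new last row of a nonvanishing minor of [M0]. *)
exists (fun c : 'I_r.+1 => (-1) ^+ (r + c) * \det (col' c (rowsub g0 M))), ord_max.
split=> [|i].
  rewrite /= addnn -mul2n exprM sqrrN !expr1n mul1r; congr (~ dvdr _ (\det _)): ndvdQ_g0.
  by apply/matrixP => k l; rewrite !mxE.
pose g k := if unlift ord_max k is Some k' then g0 k' else i.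
have := dvdQ_minors g; rewrite (expand_det_row _ ord_max); congr dvdr.
apply: eq_bigr => c _; rewrite /cofactor !mxE /g unlift_none; congr (_ * (_ * \det _)).
by apply/matrixP => k l; rewrite !mxE liftK.
Qed.

Lemma msize_non_unit (R : fieldType) n (Q : {mpoly R[n]}) :
  Q != 0 -> ~ dvdr Q 1 -> (2 <= msize Q)%N.
Proof.
move=> Q0 Q_not_unit; rewrite leqNgt ltnS; apply/negP => /msize1_polyC QC.
have c0 : Q@_0 != 0 by apply: contraNneq Q0 => c0; rewrite QC c0.
by apply: Q_not_unit; exists (Q@_0)^-1%:MP; rewrite [X in X * _]QC -mpolyCM mulfV.
Qed.

Lemma dvdr_pow_split (R : fieldType) n (Q g : {mpoly R[n]}) :
  Q != 0 -> ~ dvdr Q 1 -> g != 0 -> exists m h, g = Q ^+ m * h /\ ~ dvdr Q h.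
Proof.
move=> Q0 Q_not_unit; have sizeQ := msize_non_unit Q0 Q_not_unit.
have [k] := ubnP (msize g); elim: k g => // k IHk g; rewrite ltnS => size_g g0.
have [[h' g_Qh']|ndvdQ_g] := classic (dvdr Q g); last by exists 0%N, g; rewrite expr0 mul1r.
have h'0 : h' != 0 by apply: contraNneq g0 => h'0; rewrite g_Qh' h'0 mulr0.
have /IHk : (msize h' < k)%N.
  apply: leq_trans size_g; rewrite g_Qh' msizeM //.
  by case: (msize Q) sizeQ => [|[|s]] //= _; rewrite addSn ltnS leq_addl.
case=> // m [h [h'_Qh ndvdQ_h]].
by exists m.+1, h; rewrite g_Qh' h'_Qh exprS mulrA.
Qed.

Lemma minor_ffun (R : realType) n w r (M : 'M[{mpoly R[n]}]_(w, r)) (g : 'I_r -> 'I_w) :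
  minor M [ffun k => g k] = \det (rowsub g M).
Proof. by rewrite /minor; congr (\det _); apply/matrixP => k l; rewrite !mxE ffunE. Qed.

Lemma in_minor_ideal_minor (R : realType) n w r (M : 'M[{mpoly R[n]}]_(w, r)) f :
  in_minor_ideal M (minor M f).
Proof.
exists (fun f' => (f' == f)%:R).
by rewrite (bigD1 f) //= eqxx mul1r big1 ?addr0 // => f' /negbTE ->; rewrite mul0r.
Qed.

Section Descent.
Variables (R : realType) (n w r : nat) (Q : {mpoly R[n]}) (Delta : polymap R n w -> Prop).
Hypotheses (Q_prime : prime_elt Q) (Delta_submod : is_submodule Delta)
  (Delta_sat : forall x : polymap R n w, Delta (map_mx (fun c => Q * c) x) -> Delta x).

Lemma submodule_sum (I : Type) (s : seq I) (P : pred I) (F : I -> polymap R n w) :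
  (forall i, P i -> Delta (F i)) -> Delta (\sum_(i <- s | P i) F i).
Proof. by case: Delta_submod => Delta0 DeltaD _; apply: big_ind. Qed.

Lemma divide_out_minors (M : 'M[{mpoly R[n]}]_(w, r)) :
    (forall i, Delta (col i M)) -> (forall f, dvdr Q (minor M f)) ->
  exists M' a, [/\ forall i, Delta (col i M'), ~ dvdr Q a
                 & forall f, Q * minor M' f = a * minor M f].
Proof.
case: Q_prime => _ Q_not_unit _ DeltaM dvdQ_minors.
have [|a [j [ndvdQ_aj /fin_all_exists [y Qy]]]] := dvdr_minors_dependent Q_not_unit (M := M).
  by move=> g; rewrite -minor_ffun.
exists (col_repl M j y), (a j); split=> // [c|f]; last first.
  by rewrite /minor (det_rowsub_col_repl _ (fun i => esym (Qy i))).
have [->|cj] := eqVneq c j; last first.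
  by congr Delta: (DeltaM c); apply/matrixP => i k; rewrite !mxE (negbTE cj).
apply: Delta_sat.
have -> : map_mx (fun c => Q * c) (col j (col_repl M j y))
          = \sum_c map_mx (fun x => a c * x) (col c M).
  apply/matrixP => i k; rewrite summxE !mxE eqxx -Qy.
  by apply: eq_bigr => l _; rewrite !mxE mulrC.
by apply: submodule_sum => l _; case: Delta_submod => _ _; apply.
Qed.

Lemma minor_ideal_descent m : forall (M : 'M[{mpoly R[n]}]_(w, r)) h cf,
    (forall i, Delta (col i M)) -> \sum_f cf f * minor M f = Q ^+ m * h -> ~ dvdr Q h ->
  exists M' : 'M[{mpoly R[n]}]_(w, r), (forall i, Delta (col i M')) /\
    exists g, in_minor_ideal M' g /\ ~ in_Qideal Q g.
Proof.
case: Q_prime => Q0 _ Q_primeM.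
elim: m => [|m IHm] M h cf DeltaM sum_minors ndvdQ_h.
  by exists M; split=> //; exists h; split=> //; exists cf; rewrite sum_minors expr0 mul1r.
have [[f ndvdQ_f]|/not_ex_not_all dvdQ_minors] := classic (exists f, ~ dvdr Q (minor M f)).
  by exists M; split=> //; exists (minor M f); split=> //; apply: in_minor_ideal_minor.
have [M' [a [DeltaM' ndvdQ_a minorsM']]] := divide_out_minors DeltaM dvdQ_minors.
apply: (IHm M' (a * h) cf DeltaM'); last by case/Q_primeM.
apply: (mulfI Q0); rewrite mulr_sumr.
under eq_bigr => f _ do rewrite mulrCA minorsM' mulrCA.
by rewrite -mulr_sumr sum_minors exprS; ring.
Qed.

Lemma saturated_minor_ideal_escape :
    (exists M : 'M[{mpoly R[n]}]_(w, r),
      (forall i, Delta (col i M)) /\ exists g, in_minor_ideal M g /\ g != 0) ->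
  exists M : 'M[{mpoly R[n]}]_(w, r),
    (forall i, Delta (col i M)) /\ exists g, in_minor_ideal M g /\ ~ in_Qideal Q g.
Proof.
case: Q_prime => Q0 Q_not_unit _ [M [DeltaM [g [[cf g_cf] g0]]]].
have [m [h [g_Qh ndvdQ_h]]] := dvdr_pow_split Q0 Q_not_unit g0.
by apply: (minor_ideal_descent (m := m) (cf := cf) DeltaM _ ndvdQ_h); rewrite -g_cf.
Qed.

End Descent.

Theorem lemma3p6 (R : realType) (p q : nat) (B : 'M[R]_(p + q))
  (w r : nat) (Delta : polymap R (p + q) w -> Prop) :
  (1 <= p)%N -> (1 <= q)%N -> (3 <= p + q)%N ->
  has_signature B ->
  (r <= w)%N ->
  is_submodule Delta ->
  (forall x : polymap R (p + q) w,
      Delta (map_mx (fun c => quad_poly B * c) x) -> Delta x) ->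
  (exists M : 'M[{mpoly R[p + q]}]_(w, r),
      (forall i : 'I_r, Delta (col i M)) /\
      exists g, in_minor_ideal M g /\ g != 0) ->
  exists M : 'M[{mpoly R[p + q]}]_(w, r),
    (forall i : 'I_r, Delta (col i M)) /\
    exists g, in_minor_ideal M g /\ ~ in_Qideal (quad_poly B) g.
Proof.
move=> p1 q1 pq3 sigB _ Delta_submod Delta_sat.
have [M [N [e [NM MBM e01]]]] := signature_diag_form p1 q1 pq3 sigB.
have Q_prime := prime_elt_quad_poly (ltnW pq3) NM MBM e01.
exact: saturated_minor_ideal_escape Q_prime Delta_submod Delta_sat.
Qed.
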